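(* Let $n,k\ge 1$ be integers and let $M=V^{\otimes k}\otimes (V^* )^{\otimes k}$, where $V=\mathbb{C}^n$. For $1\le i\le k$ let $p_i=\frac1n c_{i,i}$. Then $$\ker p_1\cap \ker p_2\cap\cdots\cap \ker p_k=(\mathrm{id}-p_1)(\mathrm{id}-p_2)\cdots(\mathrm{id}-p_k)M .$$
   Context: $V=\mathbb{C}^n$ is the space of $n\times 1$ column vectors with standard basis $v_1,\dots,v_n$; $V^*$ is the space of $1\times n$ row vectors with dual basis $v_1^*,\dots,v_n^*$ ($v_i^*$ has a $1$ in column $i$ and $0$ elsewhere). For $1\le i,j\le k$ the contraction map $c_{i,j}:M\to M$ is the linear map $$c_{i,j}(u_1\otimes\cdots\otimes u_k\otimes w_1^*\otimes\cdots\otimes w_k^* )=(w_j^*u_i)\sum_{\ell=1}^n u_1\otimes\cdots\otimes v_\ell\otimes\cdots\otimes u_k\otimes w_1^*\otimes\cdots\otimes v_\ell^*\otimes\cdots\otimes w_k^*,$$ where $v_\ell$ replaces $u_i$ in the $i$th slot of $V^{\otimes k}$, $v_\ell^*$ replaces $w_j^*$ in the $j$th slot of $(V^* )^{\otimes k}$, and $w_j^*u_i\in\mathbb{C}$ is the matrix product (equal to $\mathrm{tr}(u_iw_j^* )$). One has $c_{i,i}^2=nc_{i,i}$, so $p_i$ is an idempotent; $\mathrm{id}$ is the identity map of $M$. *)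

From HB Require Import structures.
From mathcomp Require Import all_boot all_order all_algebra.
Set Implicit Arguments. Unset Strict Implicit. Unset Printing Implicit Defensive.
Import Order.TTheory GRing.Theory Num.Theory.
Local Open Scope ring_scope.

(* Multi-indices: a pair (a, b) with a, b : 'I_k -> 'I_n indexes the standard
   basis vector  v_{a 1} (x) ... (x) v_{a k} (x) v*_{b 1} (x) ... (x) v*_{b k}
   of M = V^{(x)k} (x) (V^* )^{(x)k}, V = C^n.  Slots 1..k are 'I_k = 0..k-1. *)
Definition Idx (n k : nat) : finType :=
  ({ffun 'I_k -> 'I_n} * {ffun 'I_k -> 'I_n})%type.

Notation Mten C n k := {ffun Idx n k -> C%type}.

Definition ebasis (C : numClosedFieldType) (n k : nat)
  (a b : {ffun 'I_k -> 'I_n}) : Mten C n k :=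
  [ffun x => ((x == (a, b)) : nat)%:R].

Definition upd (n k : nat) (a : {ffun 'I_k -> 'I_n}) (i : 'I_k) (l : 'I_n)
  : {ffun 'I_k -> 'I_n} := [ffun t => if t == i then l else a t].

(* contraction c_{i,j}, defined on basis vectors by
   c_{i,j}(e_{a,b}) = (v*_{b j} v_{a i}) * sum_l e_{a[i:=l], b[j:=l]}
   and extended linearly; note v*_{b j} v_{a i} = [a i == b j]. *)
Definition contr (C : numClosedFieldType) (n k : nat) (i j : 'I_k)
  (f : Mten C n k) : Mten C n k :=
  [ffun y => \sum_(x : Idx n k) f x *
     (((x.1 i == x.2 j) : nat)%:R *
        \sum_(l < n) ebasis C (upd x.1 i l) (upd x.2 j l) y)].

Definition pproj (C : numClosedFieldType) (n k : nat) (i : 'I_k)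
  (f : Mten C n k) : Mten C n k := [ffun y => (n%:R)^-1 * contr i i f y].

Definition Qmap (C : numClosedFieldType) (n k : nat) (f : Mten C n k)
  : Mten C n k :=
  foldr (fun i g => g - pproj i g) f (enum 'I_k).

From mathcomp Require Import all_boot all_algebra ring.
Set Implicit Arguments. Unset Strict Implicit. Unset Printing Implicit Defensive.
Import GRing.Theory Num.Theory.
Local Open Scope ring_scope.

(* In coordinates, (p_i f)(a, b) = [a_i = b_i] (1/n) sum_m f(a[i:=m], b[i:=m]):
   p_i averages over slot i and then restricts to the diagonal of that slot.
   Hence the p_i are idempotent and pairwise commuting.  For any such family,
   (id - p_1)...(id - p_k) fixes every vector killed by all p_i, and its
   image is killed by each p_j, because p_j commutes past the other factors
   and p_j (id - p_j) = 0. *)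

Section CommutingIdempotents.
Variables (V : zmodType) (I : eqType) (p : I -> V -> V).
Hypothesis p_sub : forall i, {morph p i : x y / x - y}.
Hypothesis p_idem : forall i x, p i (p i x) = p i x.
Hypothesis p_comm : forall i j x, i != j -> p i (p j x) = p j (p i x).

Definition compl_prod (s : seq I) (x : V) : V :=
  foldr (fun i y => y - p i y) x s.

Lemma compl_prod_id s x : (forall i, i \in s -> p i x = 0) -> compl_prod s x = x.
Proof.
elim: s => //= i s IH px0.
by rewrite IH ?px0 ?subr0 ?mem_head // => j sj; rewrite px0 // in_cons sj orbT.
Qed.

Lemma p_compl_prod s x j : j \in s -> p j (compl_prod s x) = 0.
Proof.
have p0 i : p i 0 = 0 by move: (p_sub i 0 0); rewrite !subrr.
elim: s => //= i s IH; rewrite in_cons p_sub.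
case: (eqVneq j i) => [-> _ | neq_ji /= sj]; first by rewrite p_idem subrr.
by rewrite p_comm // IH // p0 subrr.
Qed.

Lemma kernels_eq_compl_prod_image s x :
  (forall i, i \in s -> p i x = 0) <-> exists y, x = compl_prod s y.
Proof.
split=> [px0 | [y ->] i /p_compl_prod //].
by exists x; rewrite compl_prod_id.
Qed.

End CommutingIdempotents.

Section Upd.
Variables (n k : nat).
Implicit Types (a c : {ffun 'I_k -> 'I_n}) (i j : 'I_k).

Lemma eq_upd a c i l :
  (c == upd a i l) = (c i == l) && [forall t, (t != i) ==> (c t == a t)].
Proof.
apply/eqP/andP => [-> | [/eqP ci /forallP agree]].
  rewrite /upd ffunE eqxx; split=> //.
  by apply/forallP=> t; apply/implyP => /negbTE ti; rewrite ffunE ti.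
apply/ffunP=> t; rewrite ffunE.
by case: eqP => [-> | /eqP ti] //; apply/eqP/(implyP (agree t) ti).
Qed.

Lemma upd_at a i l : upd a i l i = l.
Proof. by rewrite ffunE eqxx. Qed.

Lemma upd_neq a i j l : j != i -> upd a i l j = a j.
Proof. by move/negbTE => ji; rewrite ffunE ji. Qed.

Lemma upd_upd a i l l' : upd (upd a i l) i l' = upd a i l'.
Proof. by apply/ffunP => t; rewrite !ffunE; case: eqP. Qed.

Lemma upd_updC a i j l l' : i != j ->
  upd (upd a i l) j l' = upd (upd a j l') i l.
Proof.
move=> neq_ij; apply/ffunP => t; rewrite !ffunE.
case: (t =P j) => [tj|]; case: (t =P i) => [ti|] //.
by move: neq_ij; rewrite -ti -tj eqxx.
Qed.

End Upd.

Section Contraction.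
Variables (C : numClosedFieldType) (n k : nat).
Implicit Types (a b : {ffun 'I_k -> 'I_n}) (i j : 'I_k) (x y : Idx n k).

Lemma sum_eq_upd2 y a b i :
  \sum_(l < n) (((y == (upd a i l, upd b i l)) : nat)%:R : C) =
  ((y == (upd a i (y.1 i), upd b i (y.1 i))) : nat)%:R.
Proof.
case: y => c d /=; rewrite (bigD1 (c i)) //= big1 ?addr0 // => l /negbTE cil.
by rewrite xpair_eqE eq_upd eq_sym cil.
Qed.

(* Symmetry of the matrix of c_{i,i}: both sides say that x and y are
   diagonal in slot i and agree in every other slot. *)
Lemma eq_upd2_diagC x y i :
  (((x.1 i == x.2 i) : nat)%:R * ((y == (upd x.1 i (y.1 i), upd x.2 i (y.1 i))) : nat)%:R : C)
  = ((y.1 i == y.2 i) : nat)%:R * ((x == (upd y.1 i (x.1 i), upd y.2 i (x.1 i))) : nat)%:R.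
Proof.
case: x y => [a' b'] [a b] /=; rewrite -!natrM !mulnb !xpair_eqE !eq_upd !eqxx /=.
have agreeC (c c' : {ffun 'I_k -> 'I_n}) :
    [forall t, (t != i) ==> (c t == c' t)] = [forall t, (t != i) ==> (c' t == c t)].
  by apply: eq_forallb => t; rewrite (eq_sym (c t)).
rewrite (agreeC a) (agreeC b) [b i == a i]eq_sym [b' i == a' i]eq_sym.
by case: (a' i == b' i); case: (a i == b i); rewrite /= ?andbF.
Qed.

Lemma contr_diagE i (f : Mten C n k) y :
  contr i i f y = ((y.1 i == y.2 i) : nat)%:R * \sum_(m < n) f (upd y.1 i m, upd y.2 i m).
Proof.
rewrite ffunE.
transitivity (\sum_x f x * (((y.1 i == y.2 i) : nat)%:R *
      \sum_(m < n) ((x == (upd y.1 i m, upd y.2 i m)) : nat)%:R)).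
  apply: eq_bigr => x _; congr (_ * _).
  under eq_bigr => l _ do rewrite ffunE.
  by rewrite sum_eq_upd2 eq_upd2_diagC sum_eq_upd2.
under eq_bigr => x _ do rewrite mulrCA mulr_sumr.
rewrite -mulr_sumr exchange_big /=; congr (_ * _); apply: eq_bigr => m _.
under eq_bigr => x _ do rewrite mulr_natr mulrb.
by rewrite -big_mkcond big_pred1_eq.
Qed.

Lemma pprojE i (f : Mten C n k) y :
  pproj i f y = n%:R^-1 * (((y.1 i == y.2 i) : nat)%:R *
      \sum_(m < n) f (upd y.1 i m, upd y.2 i m)).
Proof. by rewrite ffunE contr_diagE. Qed.

Lemma pprojB i : {morph @pproj C n k i : f g / f - g}.
Proof.
move=> f g; apply/ffunP => y.
have -> : (pproj i f - pproj i g) y = pproj i f y - pproj i g y by rewrite !ffunE.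
rewrite !pprojE -!mulrBr -sumrB.
by do 2 congr (_ * _); apply: eq_bigr => m _; rewrite !ffunE.
Qed.

Lemma pprojC i j (f : Mten C n k) : i != j ->
  pproj i (pproj j f) = pproj j (pproj i f).
Proof.
move=> neq_ij; apply/ffunP => y; rewrite !pprojE.
have neq_ji : j != i by rewrite eq_sym.
under eq_bigr => m _ do rewrite pprojE /= !(upd_neq _ _ neq_ji).
under [in RHS]eq_bigr => m _ do rewrite pprojE /= !(upd_neq _ _ neq_ij).
rewrite -!mulr_sumr [in RHS]exchange_big /=.
under [in RHS]eq_bigr => m _ do under eq_bigr => m' _ do
  rewrite !(upd_updC _ _ _ neq_ji).
set S := \sum_(_ < n) _.
ring.
Qed.

Hypothesis n_gt0 : (0 < n)%N.

(* After the first p_i the slot-i pair is diagonal and the inner average no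
   longer depends on m, so the outer sum contributes n * (1/n) = 1. *)
Lemma pprojK i (f : Mten C n k) : pproj i (pproj i f) = pproj i f.
Proof.
apply/ffunP => y; rewrite !pprojE.
under eq_bigr => m _ do rewrite pprojE /= !upd_at eqxx mul1r.
under eq_bigr => m _ do under eq_bigr => m' _ do rewrite !upd_upd.
have n_neq0 : (n%:R : C) != 0 by rewrite pnatr_eq0 -lt0n.
rewrite sumr_const card_ord -mulrnAl; congr (_ * (_ * _)).
by rewrite -[X in X * _ = _]mulr_natr mulVf // mul1r.
Qed.

End Contraction.

Theorem proposition1p5 (C : numClosedFieldType) (n k : nat)
  (hn : (0 < n)%N) (hk : (0 < k)%N) (g : Mten C n k) :
  (forall i : 'I_k, pproj i g = 0) <-> (exists f : Mten C n k, g = Qmap f).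
Proof.
rewrite -(kernels_eq_compl_prod_image (@pprojB C n k) (pprojK hn) (@pprojC C n k)).
by split=> [kerg i _ | kerg i]; apply: kerg; rewrite ?mem_enum.
Qed.
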